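(* Let $G$ be an additive group and let $(X,\rho)$ be the $\mathbb R$-tree described below. Then $X$ is similarity homogeneous and not homogeneous. Moreover $X$ is a metric fibration with fibers $F_a=\{(f,a)\in X\}$, $a>0$.
   Context: A function on an interval $(\alpha,\beta)$ is piecewise constant from the left if for every $x$ there is $\varepsilon>0$ with $f$ constant on $[x-\varepsilon,x]$. $X$ is the set of pairs $(f,a_f)$, $a_f>0$ real, $f:(a_f,+\infty)\to G$ piecewise constant from the left with $f|_{(b_f,+\infty)}\equiv0$ for some $b_f\ge a_f$. Order: $(f,a_f)\preceq(g,a_g)$ iff $a_f\le a_g$ and $f|_{(a_g,+\infty)}=g$; any two elements $p,q$ have a supremum $p\vee q$. Metric: $\rho((f,a_f),(g,a_g))=|a_f-a_g|$ if the pairs are comparable, and $\rho(p,q)=\rho(p,p\vee q)+\rho(p\vee q,q)$ otherwise. A similarity with coefficient $k>0$ is a map with $\rho(F(x),F(y))=k\rho(x,y)$; $X$ is similarity homogeneous (resp. homogeneous) if its group of bijective similarities (resp. isometries) acts transitively. Two subsets $F_1,F_2$ are equidistant if for every $x_i\in F_i$ there is $x_j\in F_j$ ($j\ne i$) with $\rho(x_i,x_j)$ equal to the distance between $F_1$ and $F_2$. A metric fibration of $X$ is a partition of $X$ into closed subsets that are mutually isometric (with the induced metric) and pairwise equidistant. *)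

From Stdlib Require Import Reals ClassicalEpsilon.
From mathcomp Require Import all_boot all_algebra.

Set Implicit Arguments.
Unset Strict Implicit.

Local Open Scope R_scope.

Section Generic.
Variable T : Type.
Variable d : T -> T -> R.

Definition similarity (F : T -> T) (k : R) : Prop :=
  0 < k /\ forall x y, d (F x) (F y) = k * d x y.

Definition isometry (F : T -> T) : Prop := forall x y, d (F x) (F y) = d x y.

Definition bijective_map (F : T -> T) : Prop :=
  (forall x y, F x = F y -> x = y) /\ (forall y, exists x, F x = y).

Definition similarity_homogeneous : Prop :=
  forall x y : T, exists F k, bijective_map F /\ similarity F k /\ F x = y.

Definition homogeneous : Prop :=
  forall x y : T, exists F, bijective_map F /\ isometry F /\ F x = y.

Definition closed_set (A : T -> Prop) : Prop :=
  forall x, (forall eps, 0 < eps -> exists y, A y /\ d x y < eps) -> A x.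

Definition isometric_sets (A B : T -> Prop) : Prop :=
  exists phi : T -> T,
    (forall x, A x -> B (phi x)) /\
    (forall x y, A x -> A y -> phi x = phi y -> x = y) /\
    (forall y, B y -> exists x, A x /\ phi x = y) /\
    (forall x y, A x -> A y -> d (phi x) (phi y) = d x y).

Definition is_glb (E : R -> Prop) (m : R) : Prop :=
  (forall r, E r -> m <= r) /\ (forall m', (forall r, E r -> m' <= r) -> m' <= m).

Definition set_distance (A B : T -> Prop) (D : R) : Prop :=
  is_glb (fun r => exists x y, A x /\ B y /\ r = d x y) D.

Definition equidistant (A B : T -> Prop) : Prop :=
  exists D, set_distance A B D /\
    (forall x, A x -> exists y, B y /\ d x y = D) /\
    (forall y, B y -> exists x, A x /\ d y x = D).

Definition metric_fibration (I : Type) (idx : I -> Prop) (Fam : I -> T -> Prop) : Prop :=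
  (forall i, idx i -> exists x, Fam i x) /\
  (forall x, exists i, idx i /\ Fam i x) /\
  (forall i j x, idx i -> idx j -> i <> j -> Fam i x -> Fam j x -> False) /\
  (forall i, idx i -> closed_set (Fam i)) /\
  (forall i j, idx i -> idx j -> isometric_sets (Fam i) (Fam j)) /\
  (forall i j, idx i -> idx j -> i <> j -> equidistant (Fam i) (Fam j)).
End Generic.

Section Tree.
Variable G : zmodType.

Definition pc_left (a : R) (f : R -> G) : Prop :=
  forall x, a < x -> exists eps, 0 < eps /\ a < x - eps /\
    forall y, x - eps <= y <= x -> f y = f x.

(* An element (f, a_f) of X.  The function f : (a_f,+oo) -> G is represented
   by a total function R -> G normalised to 0 on (-oo, a_f], so that equal
   pairs are equal elements. *)
Record Xpt := mkX {
  fn : R -> G;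
  lev : R;
  lev_pos : 0 < lev;
  fn_pc : pc_left lev fn;
  fn_ev0 : exists b, lev <= b /\ forall x, b < x -> fn x = @GRing.zero G;
  fn_norm : forall x, x <= lev -> fn x = @GRing.zero G
}.

Definition Xle (p q : Xpt) : Prop :=
  lev p <= lev q /\ forall x, lev q < x -> fn p x = fn q x.

Definition is_sup (p q s : Xpt) : Prop :=
  Xle p s /\ Xle q s /\ forall u, Xle p u -> Xle q u -> Xle s u.

(* the supremum p \/ q (it exists, as stated in the paper) *)
Definition Xjoin (p q : Xpt) : Xpt :=
  epsilon (inhabits p) (is_sup p q).

Definition comparable (p q : Xpt) : Prop := Xle p q \/ Xle q p.

Definition rho (p q : Xpt) : R :=
  if excluded_middle_informative (comparable p q) then Rabs (lev p - lev q)
  else Rabs (lev p - lev (Xjoin p q)) + Rabs (lev (Xjoin p q) - lev q).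

Definition fiber (a : R) (p : Xpt) : Prop := lev p = a.
End Tree.

(* Two points p, q of X have a join level c, the least level above which their
   functions agree; it is the level of p \/ q, so rho p q = (c - a_p) + (c - a_q).
   A map that changes levels by t |-> k t + m and transports the functions along
   this change of variable preserves join levels, hence multiplies rho by k.
   Dilations (f, a) |-> (f(./k), k a) and translations (f, a) |-> (f + phi, a)
   are such maps and together move any point to any other; sliding F_i onto F_j
   (k = 1, m = j - i) is an isometry between fibers.  Since |a_p - a_q| <= rho p q,
   with equality when p and q share their function, the fibers are closed and
   pairwise equidistant.  Join levels are ultrametric, so a point x lying between
   q and r is at distance less than a_x from one of them: around a point of
   level 1 there are no two points at distance 3/2 that are 3 apart, around a
   point of level 2 there are, and no isometry maps the one to the other. *)

From Pilot Require Import Defs.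
From Stdlib Require Import Reals Lra ClassicalEpsilon FunctionalExtensionality ProofIrrelevance.
From mathcomp Require Import all_boot all_algebra.
Import GRing.Theory.

Set Implicit Arguments.
Unset Strict Implicit.
Local Open Scope R_scope.

Lemma bijective_map_of_cancel (T : Type) (F F' : T -> T) :
  cancel F F' -> cancel F' F -> bijective_map F.
Proof. by move=> FK F'K; split=> [x y /(f_equal F') | y]; [rewrite !FK | exists (F' y)]. Qed.

Section Admissible.
Context {G : zmodType}.
Implicit Types g h : R -> G.

Definition left_locally_constant g : Prop :=
  forall x, exists eps, 0 < eps /\ forall y, x - eps <= y <= x -> g y = g x.

Definition eventually_zero g : Prop := exists b, forall x, b < x -> g x = 0%R.

(* Points of level l are the truncations to (l, +oo) of admissible functions. *)
Definition admissible g : Prop := left_locally_constant g /\ eventually_zero g.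

Lemma admissible_zero : admissible (fun _ => 0%R).
Proof. by split; [move=> x; exists 1; split; [lra|] | exists 0]. Qed.

Lemma admissible_add g h : admissible g -> admissible h -> admissible (fun t => g t + h t)%R.
Proof.
move=> [Cg [bg Zg]] [Ch [bh Zh]]; split.
- move=> x; case: (Cg x) => e1 [He1 E1]; case: (Ch x) => e2 [He2 E2].
  exists (Rmin e1 e2); split; first exact: Rmin_pos.
  move=> y Hy; have m1 := Rmin_l e1 e2; have m2 := Rmin_r e1 e2.
  by rewrite E1 ?E2 //; lra.
- exists (Rmax bg bh) => x Hx; have m1 := Rmax_l bg bh; have m2 := Rmax_r bg bh.
  by rewrite Zg ?Zh ?addr0 //; lra.
Qed.

Lemma admissible_opp g : admissible g -> admissible (fun t => - g t)%R.
Proof.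
move=> [Cg [b Zg]]; split.
- move=> x; case: (Cg x) => e [He E]; exists e; split=> // y Hy; by rewrite E.
- by exists b => x Hx; rewrite Zg ?oppr0.
Qed.

Lemma admissible_scale g k : 0 < k -> admissible g -> admissible (fun t => g (k * t)).
Proof.
move=> Hk [Cg [b Zg]]; split.
- move=> x; case: (Cg (k * x)) => e [He E]; exists (e / k).
  have ek : k * (e / k) = e by field; lra.
  split=> [|y Hy]; first exact: Rdiv_lt_0_compat.
  apply: E; nra.
- exists (b / k) => x Hx; apply: Zg.
  have bk : k * (b / k) = b by field; lra.
  nra.
Qed.

Lemma admissible_shift g m : admissible g -> admissible (fun t => g (t + m)).
Proof.
move=> [Cg [b Zg]]; split.
- move=> x; case: (Cg (x + m)) => e [He E]; exists e; split=> // y Hy; apply: E; lra.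
- by exists (b - m) => x Hx; apply: Zg; lra.
Qed.

End Admissible.

Section Points.
Context {G : zmodType}.
Implicit Types (g : R -> G) (p q : Xpt G).

Definition trunc (l : R) g (t : R) : G := if Rlt_dec l t then g t else 0%R.

Lemma trunc_pc_left l g : left_locally_constant g -> pc_left l (trunc l g).
Proof.
move=> Cg x Hx; case: (Cg x) => e [He E].
have m1 := Rmin_l e ((x - l) / 2); have m2 := Rmin_r e ((x - l) / 2).
exists (Rmin e ((x - l) / 2)); split; first by apply: Rmin_pos; lra.
split=> [|y Hy]; first lra.
rewrite /trunc; case: Rlt_dec => [ly|nly]; last lra.
case: Rlt_dec => [lx|nlx]; [apply: E|]; lra.
Qed.

Lemma trunc_ev0 l g : eventually_zero g -> exists b, l <= b /\ forall x, b < x -> trunc l g x = 0%R.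
Proof.
move=> [b Zg]; exists (Rmax l b); split=> [|x Hx]; first exact: Rmax_l.
rewrite /trunc; case: Rlt_dec => // lx; apply: Zg.
have := Rmax_r l b; lra.
Qed.

Lemma trunc_le l g x : x <= l -> trunc l g x = 0%R.
Proof. by rewrite /trunc; case: Rlt_dec => // lx; lra. Qed.

Definition mkXpt {g l} (Hl : 0 < l) (Hg : admissible g) : Xpt G :=
  @mkX G (trunc l g) l Hl (trunc_pc_left (proj1 Hg)) (trunc_ev0 l (proj2 Hg)) (@trunc_le l g).

Lemma mkXpt_fn g l (Hl : 0 < l) (Hg : admissible g) t : l < t -> fn (mkXpt Hl Hg) t = g t.
Proof. by rewrite /= /trunc; case: Rlt_dec => // nlt; lra. Qed.

Lemma fn_admissible p : admissible (fn p).
Proof.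
split.
- move=> x; case: (Rlt_dec (lev p) x) => [Hx | Hx].
  + by case: (fn_pc Hx) => e [He [_ E]]; exists e.
  + exists 1; split=> [|y Hy]; first lra.
    by rewrite !fn_norm //; lra.
- by case: (fn_ev0 p) => b [_ Zp]; exists b.
Qed.

Lemma Xpt_eq p q : lev p = lev q -> (forall t, lev p < t -> fn p t = fn q t) -> p = q.
Proof.
case: p q => [f1 l1 ? ? ? N1] [f2 l2 ? ? ? N2] /= El Ef; subst l2.
have Ef' : f1 = f2.
  apply: functional_extensionality => t; case: (Rlt_dec l1 t) => [/Ef // | Ht].
  by rewrite N1 ?N2 //; lra.
by subst f2; f_equal; apply: proof_irrelevance.
Qed.

Definition relevel p {a} (Ha : 0 < a) : Xpt G := mkXpt Ha (fn_admissible p).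

Definition zero_pt {a} (Ha : 0 < a) : Xpt G := mkXpt Ha admissible_zero.

Lemma zero_pt_fn a Ha t : fn (@zero_pt a Ha) t = 0%R.
Proof. by rewrite /= /trunc; case: Rlt_dec. Qed.

Lemma relevel_fn p a (Ha : 0 < a) t : a < t -> fn (relevel p Ha) t = fn p t.
Proof. exact: mkXpt_fn. Qed.

End Points.

Section JoinLevel.
Context {G : zmodType}.
Implicit Types (p q r s : Xpt G).

Definition agree_above p q (t : R) : Prop := forall x, t < x -> fn p x = fn q x.

Definition join_level p q (c : R) : Prop :=
  lev p <= c /\ lev q <= c /\ agree_above p q c /\
  forall t, lev p <= t -> lev q <= t -> agree_above p q t -> c <= t.

Lemma join_level_unique p q c c' : join_level p q c -> join_level p q c' -> c = c'.
Proof.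
move=> [Pc [Qc [Ac Mc]]] [Pc' [Qc' [Ac' Mc']]].
by have := Mc _ Pc' Qc' Ac'; have := Mc' _ Pc Qc Ac; lra.
Qed.

Lemma join_level_sym p q c : join_level p q c -> join_level q p c.
Proof.
move=> [Pc [Qc [Ac Mc]]]; split; [|split; [|split]] => //.
- by move=> x /Ac.
- by move=> t Qt Pt At; apply: Mc => // x /At.
Qed.

Lemma join_level_exists p q : exists c, join_level p q c.
Proof.
case: (fn_ev0 p) => bp [Pb Zp]; case: (fn_ev0 q) => bq [Qb Zq].
(* [completeness] provides suprema only: take the supremum of the negated levels. *)
pose E u := lev p <= - u /\ lev q <= - u /\ agree_above p q (- u).
have bE : bound E by exists (- lev p) => u [Pu _]; lra.
have neE : exists u, E u.
  exists (- Rmax bp bq); rewrite /E Ropp_involutive.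
  have mp := Rmax_l bp bq; have mq := Rmax_r bp bq.
  split; [lra | split; [lra | move=> x Hx]].
  by rewrite Zp ?Zq //; lra.
case: (completeness E bE neE) => m [ubm lubm].
exists (- m); split; [|split; [|split]].
- suff : m <= - lev p by lra.
  by apply: lubm => u [Pu _]; lra.
- suff : m <= - lev q by lra.
  by apply: lubm => u [_ [Qu _]]; lra.
- move=> x Hx; apply: NNPP => Hne.
  suff : m <= - x by lra.
  apply: lubm => u [_ [_ Au]]; case: (Rle_dec u (- x)) => // /Rnot_le_lt ux.
  by case: Hne; apply: Au; lra.
- move=> t Pt Qt At.
  suff : - t <= m by lra.
  by apply: ubm; rewrite /E Ropp_involutive.
Qed.

Lemma Xle_relevel p q c (Hc : 0 < c) : lev q <= c -> agree_above q p c -> Xle q (relevel p Hc).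
Proof. by move=> Qc Ac; split=> // x Hx; rewrite relevel_fn //; apply: Ac. Qed.

Lemma relevel_sup p q c (Hc : 0 < c) : join_level p q c -> is_sup p q (relevel p Hc).
Proof.
move=> [Pc [Qc [Ac Mc]]]; split; [|split].
- exact: Xle_relevel.
- by apply: Xle_relevel => // x /Ac.
- move=> u [Pu Eu] [Qu Fu].
  have cu : c <= lev u by apply: Mc => // x Hx; rewrite Eu ?Fu.
  by split=> // x Hx; rewrite relevel_fn ?Eu //; lra.
Qed.

Lemma sup_exists p q : exists s, is_sup p q s.
Proof.
case: (join_level_exists p q) => c Jc.
have Hc : 0 < c by have := lev_pos p; case: Jc; lra.
by exists (relevel p Hc); apply: relevel_sup.
Qed.

Lemma join_level_sup p q s : is_sup p q s -> join_level p q (lev s).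
Proof.
move=> [[Ps Es] [[Qs Fs] Ms]]; split; [|split; [|split]] => //.
- by move=> x Hx; rewrite Es ?Fs.
- move=> t Pt Qt At.
  have Ht : 0 < t by have := lev_pos p; lra.
  have [st _] : Xle s (relevel p Ht).
    by apply: Ms; [apply: Xle_relevel | apply: Xle_relevel => // x /At].
  exact: st.
Qed.

Lemma join_level_Xle p q : Xle p q -> join_level p q (lev q).
Proof. by move=> [Pq Eq]; split; [|split; [lra | split]]. Qed.

Lemma rho_join_level p q c : join_level p q c -> rho p q = 2 * c - lev p - lev q.
Proof.
move=> Jc; rewrite /rho; case: excluded_middle_informative => [[Hpq | Hqp] | Hnc] /=.
- rewrite -(join_level_unique (join_level_Xle Hpq) Jc).
  by have le_pq := proj1 Hpq; rewrite Rabs_left1; lra.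
- rewrite -(join_level_unique (join_level_Xle Hqp) (join_level_sym Jc)).
  by have le_qp := proj1 Hqp; rewrite Rabs_right; lra.
- have Js : join_level p q (lev (Xjoin p q)).
    by apply: join_level_sup; apply: epsilon_spec; apply: sup_exists.
  rewrite -(join_level_unique Js Jc); case: Js => Ps [Qs _].
  by rewrite Rabs_left1 ?Rabs_right; lra.
Qed.

Lemma Rabs_lev_le_rho p q : Rabs (lev p - lev q) <= rho p q.
Proof.
case: (join_level_exists p q) => c Jc; rewrite (rho_join_level Jc).
by case: Jc => Pc [Qc _]; apply: Rabs_le; lra.
Qed.

Lemma rho_agree p q : agree_above p q (Rmax (lev p) (lev q)) -> rho p q = Rabs (lev p - lev q).
Proof.
move=> Apq; have Jm : join_level p q (Rmax (lev p) (lev q)).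
  split; [exact: Rmax_l | split; [exact: Rmax_r | split=> // t Pt Qt _]].
  exact: Rmax_lub.
rewrite (rho_join_level Jm) /Rmax; case: Rle_dec => H.
- by rewrite Rabs_left1; lra.
- by rewrite Rabs_right; lra.
Qed.

Lemma rho_relevel p a (Ha : 0 < a) : rho p (relevel p Ha) = Rabs (lev p - a).
Proof.
apply: rho_agree => t Ht; change (Rmax (lev p) a < t) in Ht.
by rewrite relevel_fn //; have := Rmax_r (lev p) a; lra.
Qed.

Lemma rho_zero_pt a b (Ha : 0 < a) (Hb : 0 < b) : rho (@zero_pt G a Ha) (zero_pt Hb) = Rabs (a - b).
Proof. by apply: rho_agree => t _; rewrite !zero_pt_fn. Qed.

Lemma join_level_ultrametric x q r c1 c2 c3 :
  join_level x q c1 -> join_level x r c2 -> join_level q r c3 -> c3 <= Rmax c1 c2.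
Proof.
move=> [X1 [Q1 [A1 _]]] [X2 [R2 [A2 _]]] [_ [_ [_ M3]]].
have m1 := Rmax_l c1 c2; have m2 := Rmax_r c1 c2.
apply: M3; try lra.
by move=> z Hz; rewrite -A1 ?A2 //; lra.
Qed.

Lemma rho_geodesic_leg_lt_lev x q r :
  rho q r = rho x q + rho x r -> rho x q < lev x \/ rho x r < lev x.
Proof.
case: (join_level_exists x q) => c1 J1; case: (join_level_exists x r) => c2 J2.
case: (join_level_exists q r) => c3 J3.
have c3_le := join_level_ultrametric J1 J2 J3.
rewrite (rho_join_level J1) (rho_join_level J2) (rho_join_level J3).
case: J1 => [X1 _]; case: J2 => [X2 _]; have := lev_pos q; have := lev_pos r.
rewrite /Rmax in c3_le; case: Rle_dec c3_le => _ c3_le; lra.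
Qed.

Lemma join_level_affine k m p q p' q' c : 0 < k ->
  lev p' = k * lev p + m -> lev q' = k * lev q + m ->
  (forall x, lev p < x -> lev q < x ->
     fn p' (k * x + m) = fn q' (k * x + m) <-> fn p x = fn q x) ->
  join_level p q c -> join_level p' q' (k * c + m).
Proof.
move=> Hk Ep Eq Efn [Pc [Qc [Ac Mc]]]; rewrite /join_level Ep Eq.
split; [nra | split; [nra | split]].
- move=> y Hy; have Ey : k * ((y - m) / k) + m = y by field; lra.
  have Hc : c < (y - m) / k by nra.
  by rewrite -Ey; apply/Efn; [lra | lra | apply: Ac].
- move=> t Pt Qt At; have Et : k * ((t - m) / k) + m = t by field; lra.
  suff : c <= (t - m) / k by nra.
  apply: Mc; [nra | nra | move=> x Hx].
  by apply/Efn; [nra | nra | apply: At; nra].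
Qed.

Lemma rho_affine k m p q p' q' : 0 < k ->
  lev p' = k * lev p + m -> lev q' = k * lev q + m ->
  (forall x, lev p < x -> lev q < x ->
     fn p' (k * x + m) = fn q' (k * x + m) <-> fn p x = fn q x) ->
  rho p' q' = k * rho p q.
Proof.
move=> Hk Ep Eq Efn; case: (join_level_exists p q) => c Jc.
rewrite (rho_join_level Jc) (rho_join_level (join_level_affine Hk Ep Eq Efn Jc)) Ep Eq.
ring.
Qed.

End JoinLevel.

Section Maps.
Context {G : zmodType}.
Implicit Types (p q : Xpt G) (phi : R -> G).

Definition dilate k (Hk : 0 < k) p : Xpt G :=
  mkXpt (Rmult_lt_0_compat _ _ Hk (lev_pos p))
        (admissible_scale (Rinv_0_lt_compat _ Hk) (fn_admissible p)).

Lemma dilate_fn k (Hk : 0 < k) p t : k * lev p < t -> fn (dilate Hk p) t = fn p (/ k * t).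
Proof. exact: mkXpt_fn. Qed.

Lemma rho_dilate k (Hk : 0 < k) p q : rho (dilate Hk p) (dilate Hk q) = k * rho p q.
Proof.
apply: (rho_affine (m := 0)) => [// | | | x Px Qx]; try by rewrite Rplus_0_r.
have Ex : / k * (k * x + 0) = x by field; lra.
by rewrite !dilate_fn ?Ex //; nra.
Qed.

Lemma dilate_dilate k1 k2 (H1 : 0 < k1) (H2 : 0 < k2) p :
  k1 * k2 = 1 -> dilate H1 (dilate H2 p) = p.
Proof.
move=> Ek; have Ep : k1 * (k2 * lev p) = lev p by rewrite -Rmult_assoc Ek Rmult_1_l.
apply: Xpt_eq => [// | t Ht]; change (k1 * (k2 * lev p) < t) in Ht.
have Et : / k2 * (/ k1 * t) = t.
  by rewrite -Rmult_assoc -Rinv_mult (Rmult_comm k2) Ek Rinv_1 Rmult_1_l.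
rewrite dilate_fn // dilate_fn ?Et //.
apply: (Rmult_lt_reg_l k1) => //; rewrite Ep -Rmult_assoc Rinv_r ?Rmult_1_l //; lra.
Qed.

Definition translate phi (Hphi : admissible phi) p : Xpt G :=
  mkXpt (lev_pos p) (admissible_add (fn_admissible p) Hphi).

Lemma translate_fn phi (Hphi : admissible phi) p t :
  lev p < t -> fn (translate Hphi p) t = (fn p t + phi t)%R.
Proof. exact: mkXpt_fn. Qed.

Lemma rho_translate phi (Hphi : admissible phi) p q :
  rho (translate Hphi p) (translate Hphi q) = rho p q.
Proof.
rewrite -[RHS]Rmult_1_l.
apply: (rho_affine (m := 0)) => [| | | x Px Qx]; try lra; try by rewrite Rmult_1_l Rplus_0_r.
rewrite Rmult_1_l Rplus_0_r !translate_fn //.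
by split=> [/addIr | ->].
Qed.

Lemma translate_translate phi psi (Hphi : admissible phi) (Hpsi : admissible psi) p :
  (forall t, phi t + psi t = 0)%R -> translate Hpsi (translate Hphi p) = p.
Proof.
move=> Epp; apply: Xpt_eq => [// | t Ht].
by rewrite !translate_fn // -addrA Epp addr0.
Qed.

Lemma translate_onto p q (H : admissible (fun t => fn q t - fn p t)%R) :
  lev p = lev q -> translate H p = q.
Proof.
move=> Epq; apply: Xpt_eq => [// | t Ht].
by rewrite translate_fn // addrC subrK.
Qed.

Definition slide a (Ha : 0 < a) p : Xpt G :=
  mkXpt Ha (admissible_shift (lev p - a) (fn_admissible p)).

Lemma slide_fn a (Ha : 0 < a) p t : a < t -> fn (slide Ha p) t = fn p (t + (lev p - a)).
Proof. exact: mkXpt_fn. Qed.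

Lemma rho_slide a (Ha : 0 < a) p q : lev p = lev q -> rho (slide Ha p) (slide Ha q) = rho p q.
Proof.
move=> Epq; rewrite -[RHS]Rmult_1_l.
apply: (rho_affine (m := a - lev p)) => [| | | x Px Qx]; try (rewrite /=; lra).
rewrite Rmult_1_l !slide_fn; try lra.
by rewrite -Epq; have -> : x + (a - lev p) + (lev p - a) = x by ring.
Qed.

Lemma slide_slide a b (Ha : 0 < a) (Hb : 0 < b) p : b = lev p -> slide Hb (slide Ha p) = p.
Proof.
move=> Eb; apply: Xpt_eq => [// | t Ht]; change (b < t) in Ht.
rewrite !slide_fn /=; try lra.
by have -> : t + (a - b) + (lev p - a) = t by rewrite Eb; ring.
Qed.

End Maps.

Section Homogeneity.
Context {G : zmodType}.

Lemma X_similarity_homogeneous : similarity_homogeneous (@rho G).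
Proof.
move=> x y.
have Hk : 0 < lev y / lev x by apply: Rdiv_lt_0_compat; apply: lev_pos.
pose z := dilate Hk x.
have Hphi : admissible (fun t => fn y t - fn z t)%R.
  exact: admissible_add (fn_admissible y) (admissible_opp (fn_admissible z)).
have Hpsi := admissible_opp Hphi.
exists (fun p => translate Hphi (dilate Hk p)), (lev y / lev x); split; [|split].
- pose F' p := dilate (Rinv_0_lt_compat _ Hk) (translate Hpsi p).
  apply: (bijective_map_of_cancel (F' := F')) => p; rewrite /F'.
  + by rewrite translate_translate ?dilate_dilate // => [|t]; [rewrite Rinv_l; lra | rewrite addrN].
  + by rewrite dilate_dilate ?translate_translate // => [t|]; [rewrite addNr | rewrite Rinv_r; lra].
- by split=> // p q; rewrite rho_translate rho_dilate.
- apply: translate_onto; rewrite /=; field; have := lev_pos x; lra.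
Qed.

Lemma X_not_homogeneous : ~ homogeneous (@rho G).
Proof.
move=> Hhom.
have H1 : 0 < 1 by lra.
have H2 : 0 < 2 by lra.
have H12 : 0 < 1 / 2 by lra.
have H72 : 0 < 7 / 2 by lra.
case: (Hhom (zero_pt H1) (zero_pt H2)) => F [[_ Fsurj] [Fiso Fx]].
case: (Fsurj (zero_pt H12)) => q Fq; case: (Fsurj (zero_pt H72)) => r Fr.
have := @rho_geodesic_leg_lt_lev G (zero_pt H1) q r.
rewrite -[rho q r]Fiso -[rho _ q]Fiso -[rho _ r]Fiso Fx Fq Fr !rho_zero_pt /=.
by rewrite /Rabs; repeat case: Rcase_abs; lra.
Qed.

Lemma fiber_closed a : Defs.closed_set (@rho G) (fiber a).
Proof.
move=> x Hx; apply: NNPP => Hne.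
have [y [Ly Hy]] : exists y, fiber a y /\ rho x y < Rabs (lev x - a).
  by apply: Hx; apply: Rabs_pos_lt; rewrite /fiber in Hne; lra.
by have := Rabs_lev_le_rho x y; rewrite Ly; lra.
Qed.

Lemma fibers_isometric i j (Hi : 0 < i) (Hj : 0 < j) :
  isometric_sets (@rho G) (fiber i) (fiber j).
Proof.
exists (slide Hj); split; [|split; [|split]] => //.
- move=> p q Lp Lq Epq.
  by rewrite -(slide_slide Hj Hi (esym Lp)) Epq slide_slide.
- by move=> y Ly; exists (slide Hi y); split=> //; apply: slide_slide.
- by move=> p q Lp Lq; apply: rho_slide; rewrite Lp Lq.
Qed.

Lemma fibers_equidistant i j (Hi : 0 < i) (Hj : 0 < j) :
  equidistant (@rho G) (fiber i) (fiber j).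
Proof.
exists (Rabs (i - j)); split; [split|split].
- by move=> _ [x [y [Lx [Ly ->]]]]; rewrite -Lx -Ly; apply: Rabs_lev_le_rho.
- move=> m lbm; rewrite -(rho_zero_pt (G := G) Hi Hj); apply: lbm.
  by exists (zero_pt Hi), (zero_pt Hj).
- by move=> x Lx; exists (relevel x Hj); split=> //; rewrite rho_relevel Lx.
- by move=> y Ly; exists (relevel y Hi); split=> //; rewrite rho_relevel Ly Rabs_minus_sym.
Qed.

Lemma X_metric_fibration : metric_fibration (@rho G) (fun a => 0 < a) (@fiber G).
Proof.
split; [|split; [|split; [|split; [|split]]]].
- by move=> i Hi; exists (zero_pt Hi).
- by move=> x; exists (lev x); split; [apply: lev_pos|].
- by move=> i j x _ _ Hne Li Lj; apply: Hne; rewrite -Li -Lj.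
- by move=> i _; apply: fiber_closed.
- by move=> i j; apply: fibers_isometric.
- by move=> i j Hi Hj _; apply: fibers_equidistant.
Qed.

End Homogeneity.

Theorem theorem4 (G : zmodType) :
  similarity_homogeneous (@rho G) /\
  ~ homogeneous (@rho G) /\
  metric_fibration (@rho G) (fun a : R => Rlt 0 a) (@fiber G).
Proof.
split; [exact: X_similarity_homogeneous | split].
- exact: X_not_homogeneous.
- exact: X_metric_fibration.
Qed.
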